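(* Let $\|\cdot\|=\|\cdot\|_2$, and let $d_*>0$, $a<d_*$, $\bar D>0$. Then $$\kappa(a,d_*,\bar D)\le\sqrt{\max\Big\{1-\frac{(d_*-a)^2}{4\bar D^2},\ \frac{d_*+a}{2d_*}\Big\}},$$ where $\kappa(a,d_*,\bar D):=\max\{\min_{\beta\in[0,1]}\|w-\beta z\|_2:\ \|w\|_2=1,\ w^\top z\ge(1-a/d_* )/2,\ \|z\|_2\le\bar D/d_*\}$.
   Context: For the $\ell_2$-norm, $\nabla\|w\|_2=w$ when $\|w\|_2=1$, so the general definition $\kappa(a,d_*,\bar D)=\max_{\|w\|=1,\ \nabla\|w\|^\top z\ge(1-a/d_* )/2,\ \|z\|_2\le\bar D/d_*}\min_{\beta\in[0,1]}\|w-\beta z\|$ reduces to the one stated. *)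

From HB Require Import structures.
From mathcomp Require Import all_boot all_order all_algebra.
From mathcomp Require Import boolp classical_sets reals.
Set Implicit Arguments. Unset Strict Implicit. Unset Printing Implicit Defensive.
Import Order.TTheory GRing.Theory Num.Theory.
Local Open Scope ring_scope.
Local Open Scope classical_set_scope.

Section Kappa.
Variable R : realType.

Definition dotv (n : nat) (u v : 'rV[R]_n) : R := \sum_(i < n) u 0 i * v 0 i.

Definition norm2 (n : nat) (u : 'rV[R]_n) : R := Num.sqrt (dotv u u).

(* min_{beta in [0,1]} ||w - beta z||_2 (written as an infimum; it is attained). *)
Definition segdist (n : nat) (w z : 'rV[R]_n) : R :=
  inf [set norm2 (w - b *: z) | b in [set b : R | (0 <= b)%R && (b <= 1)%R]].

Definition kappa_feasible (n : nat) (a ds Db : R) (w z : 'rV[R]_n) : Prop :=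
  [/\ norm2 w = 1, (1 - a / ds) / 2 <= dotv w z & norm2 z <= Db / ds].

Definition kappa (n : nat) (a ds Db : R) : R :=
  sup [set segdist wz.1 wz.2 | wz in [set wz : 'rV[R]_n * 'rV[R]_n |
        kappa_feasible a ds Db wz.1 wz.2]].

End Kappa.

(* For a feasible pair, ||w - b z||^2 = 1 - 2 b (w.z) + b^2 ||z||^2 with w.z >= t := (1 - a/d)/2 > 0
   and ||z|| <= D/d. If ||z||^2 <= w.z, the endpoint b = 1 gives at most 1 - w.z <= 1 - t; otherwise
   the unconstrained minimiser b = w.z / ||z||^2 lies in [0, 1] and gives
   1 - (w.z)^2 / ||z||^2 <= 1 - t^2 d^2 / D^2. *)
From HB Require Import structures.
From mathcomp Require Import all_boot all_order all_algebra.
From mathcomp Require Import boolp classical_sets reals.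
From mathcomp Require Import ring lra.
Set Implicit Arguments. Unset Strict Implicit. Unset Printing Implicit Defensive.
Import Order.TTheory GRing.Theory Num.Theory.
Local Open Scope ring_scope.
Local Open Scope classical_set_scope.

Lemma quadratic_min_unit_interval (R : realFieldType) (c s t D2 : R) :
  0 < t -> t <= c -> 0 <= s -> s <= D2 ->
  exists2 b, 0 <= b <= 1 &
    1 - 2 * b * c + b ^+ 2 * s <= Num.max (1 - t ^+ 2 / D2) (1 - t).
Proof.
move=> t0 tc s0 sD2.
have [sc | cs] := leP s c.
  by exists 1; rewrite ?ler01 ?lexx // le_max; apply/orP; right; lra.
have s0' : 0 < s by lra.
exists (c / s).
  by rewrite divr_ge0 ?ler_pdivrMr ?mul1r ?ltW //=; lra.
have -> : 1 - 2 * (c / s) * c + (c / s) ^+ 2 * s = 1 - c ^+ 2 / s by field; lra.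
rewrite le_max lerD2l lerN2; apply/orP; left.
have t2c2 : t ^+ 2 <= c ^+ 2 by rewrite ler_sqr ?nnegrE; lra.
apply: (@le_trans _ _ (t ^+ 2 / s)); last by rewrite ler_pM2r ?invr_gt0.
by rewrite ler_pM2l ?exprn_gt0 // lef_pV2 ?posrE //; lra.
Qed.

Section Euclid.
Variables (R : realType) (n : nat).
Implicit Types (u w z : 'rV[R]_n) (b : R).

Lemma dotv_ge0 u : 0 <= dotv u u.
Proof. by apply: sumr_ge0 => i _; rewrite -expr2 sqr_ge0. Qed.

Lemma norm2_ge0 u : 0 <= norm2 u.
Proof. exact: sqrtr_ge0. Qed.

Lemma sqr_norm2 u : norm2 u ^+ 2 = dotv u u.
Proof. by rewrite sqr_sqrtr ?dotv_ge0. Qed.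

Lemma dotvBZ w z b :
  dotv (w - b *: z) (w - b *: z) = dotv w w - 2 * b * dotv w z + b ^+ 2 * dotv z z.
Proof.
rewrite /dotv; under eq_bigr => i _ do rewrite !mxE.
by rewrite !mulr_sumr -sumrB -big_split /=; apply: eq_bigr => i _; ring.
Qed.

Lemma segdist_le w z b M :
  0 <= b <= 1 -> norm2 (w - b *: z) <= M -> segdist w z <= M.
Proof.
move=> b01 le_M; apply: le_trans (ge_inf _ _) le_M; last by exists b.
by exists 0 => _ [b' _ <-]; exact: norm2_ge0.
Qed.

(* [0 <= M] covers the infeasible case, where [kappa] is [sup set0 = 0]. *)
Lemma kappa_le a ds Db M :
  0 <= M -> (forall w z, kappa_feasible a ds Db w z -> segdist w z <= M) ->
  kappa n a ds Db <= M.
Proof.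
move=> M0 le_M; rewrite /kappa; set E := [set _ | _ in _].
have [[x Ex] | E0] := pselect (E !=set0).
  by apply: ge_sup; [exists x | move=> _ [wz Fwz <-]; exact: le_M].
suff -> : E = set0 by rewrite sup0.
by apply/seteqP; split=> x // Ex; apply: E0; exists x.
Qed.

End Euclid.

Theorem mainTheorem8 (R : realType) (n : nat) (a ds Db : R) :
  0 < ds -> a < ds -> 0 < Db ->
  kappa n a ds Db <=
    Num.sqrt (Num.max (1 - (ds - a) ^+ 2 / (4 * Db ^+ 2)) ((ds + a) / (2 * ds))).
Proof.
move=> ds0 ads Db0; set t := (1 - a / ds) / 2.
have t0 : 0 < t.
  have : a / ds < 1 by rewrite ltr_pdivrMr ?mul1r.
  rewrite /t; lra.
have -> : 1 - (ds - a) ^+ 2 / (4 * Db ^+ 2) = 1 - t ^+ 2 / (Db / ds) ^+ 2.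
  by rewrite /t; field; rewrite ?gt_eqF.
have -> : (ds + a) / (2 * ds) = 1 - t by rewrite /t; field; rewrite gt_eqF.
apply: kappa_le; first exact: sqrtr_ge0.
move=> w z [w1 t_wz z_le].
have zz : dotv z z <= (Db / ds) ^+ 2.
  by rewrite -sqr_norm2 ler_sqr ?nnegrE ?norm2_ge0 // divr_ge0 ?ltW.
have [b b01 le_max] := quadratic_min_unit_interval t0 t_wz (dotv_ge0 z) zz.
apply: (segdist_le b01).
have ww : dotv w w = 1 by rewrite -sqr_norm2 w1 expr1n.
by rewrite /norm2 ler_wsqrtr // dotvBZ ww.
Qed.
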